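(* $H_1(\Lambda_1(\mathbb{Q}\mathrm{Par}_2);\mathbb{Q})\cong\mathbb{Q}^4$.
   Context: The nonsymmetric operad $\mathrm{Par}_2$: $\mathrm{Par}_2((1))=\{1\}$, and for $m\ge2$, $\mathrm{Par}_2((m))=\{x_1^ax_2^b: a,b\ge1, a+b=m\}$. Partial composition: for $c=x_1^{a_1}x_2^{a_2}$ and $d$ a monomial of degree $j$ (or $d=1$ of degree 1), $c\circ_sd$ multiplies out by raising the exponent of the variable $x_l$ whose block contains $s$ (i.e. $l=1$ if $s\le a_1$, $l=2$ otherwise) by $j-1$; $1$ is a two-sided unit. $\Lambda_1(\mathbb{Q}\mathrm{Par}_2)=\bigoplus_{m\ge2}\mathbb{Q}\mathrm{Par}_2((m))$ with Lie bracket $[c,d]=\sum_{t=1}^{j}d\circ_tc-\sum_{s=1}^{k}c\circ_sd$ for $c$ of degree $k$, $d$ of degree $j$. $H_1$ is Lie algebra homology, i.e. the abelianization. *)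

(* Q Par_2 in arities >= 2 is modelled inside the polynomial ring Q[x1,x2]:
   the basis element x1^a x2^b of Par_2((a+b)) is the monomial x1^a x2^b.
   Lambda_1(Q Par_2) is the subspace of {mpoly rat[2]} spanned by the monomials
   with both exponents >= 1. *)
From HB Require Import structures.
From mathcomp Require Import all_boot all_order all_algebra.
From mathcomp Require Import mpoly.
Set Implicit Arguments. Unset Strict Implicit. Unset Printing Implicit Defensive.
Import Order.TTheory GRing.Theory Num.Theory.
Local Open Scope ring_scope.

Definition x1 : 'I_2 := ord0.
Definition x2 : 'I_2 := ord_max.

Definition mono (a b : nat) : {mpoly rat[2]} := 'X_x1 ^+ a * 'X_x2 ^+ b.

(* partial composition c o_s d for c = x1^a1 x2^a2 and d a monomial of degree j:
   raise the exponent of the variable whose block contains s by j-1 *)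
Definition pcomp (a1 a2 s j : nat) : {mpoly rat[2]} :=
  if (s <= a1)%N then mono (a1 + j - 1) a2 else mono a1 (a2 + j - 1).

(* Lie bracket on basis elements c = x1^a1 x2^a2 (degree k), d = x1^b1 x2^b2
   (degree j):  [c,d] = sum_{t=1}^{j} d o_t c - sum_{s=1}^{k} c o_s d *)
Definition brmono (a1 a2 b1 b2 : nat) : {mpoly rat[2]} :=
  \sum_(1 <= t < (b1 + b2).+1) pcomp b1 b2 t (a1 + a2)
  - \sum_(1 <= s < (a1 + a2).+1) pcomp a1 a2 s (b1 + b2).

Definition br (p q : {mpoly rat[2]}) : {mpoly rat[2]} :=
  \sum_(m <- msupp p) \sum_(n <- msupp q)
     (p@_m * q@_n) *: brmono (m x1) (m x2) (n x1) (n x2).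

Definition inL (p : {mpoly rat[2]}) : bool :=
  all (fun m : 'X_{1..2} => (0 < m x1)%N && (0 < m x2)%N) (msupp p).

Definition inDerived (p : {mpoly rat[2]}) : Prop :=
  exists s : seq (rat * {mpoly rat[2]} * {mpoly rat[2]}),
    all (fun x => inL x.1.2 && inL x.2) s /\
    p = \sum_(x <- s) x.1.1 *: br x.1.2 x.2.

(* H_1(L; Q) = L / [L, L] is isomorphic to Q^n : there is a Q-linear map
   from L onto Q^n whose kernel is exactly [L, L]. *)
Definition H1_iso_Qn (n : nat) : Prop :=
  exists phi : {mpoly rat[2]} -> 'rV[rat]_n,
    (forall (a : rat) p q, inL p -> inL q -> phi (a *: p + q) = a *: phi p + phi q) /\
    (forall v : 'rV[rat]_n, exists2 p, inL p & phi p = v) /\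
    (forall p, inL p -> (phi p = 0 <-> inDerived p)).

(* The bracket of x1^a1 x2^a2 and x1^b1 x2^b2 is homogeneous of degree a1 + a2 + b1 + b2 - 1,
   so [L, L] is graded and lives in degrees >= 3.  In degree 3 the only bracket is
   [x1 x2, x1 x2] = 0; in degree 4 the brackets [x1 x2, x1^2 x2] and [x1 x2, x1 x2^2] span
   x1^2 x2^2 and x1^3 x2 - x1 x2^3; in every degree n >= 5 the brackets with x1 x2, x1^2 x2 and
   x1 x2^2 span all monomials: first x1 x2^(n-1) and x1^(n-1) x2, then the others by walking
   along the degree-n line with [x1 x2, -].  Hence L / [L, L] has basis the classes of
   x1 x2, x1^2 x2, x1 x2^2 and x1^3 x2 = x1 x2^3, and reading off the coefficients of
   x1 x2, x1^2 x2, x1 x2^2 and the sum of those of x1^3 x2 and x1 x2^3 realises the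
   isomorphism with Q^4. *)
From Pilot Require Import Defs.
From HB Require Import structures.
From mathcomp Require Import all_boot all_order all_algebra.
From mathcomp Require Import mpoly.
From mathcomp Require Import ring zify.
Set Implicit Arguments. Unset Strict Implicit. Unset Printing Implicit Defensive.
Import Order.TTheory GRing.Theory Num.Theory.
Local Open Scope ring_scope.

Definition mnm2 (a b : nat) : 'X_{1..2} := (U_(x1) *+ a + U_(x2) *+ b)%MM.

Lemma mnm2E1 a b : mnm2 a b x1 = a.
Proof. by rewrite /mnm2 mnmDE !mulmnE !mnm1E /=; lia. Qed.

Lemma mnm2E2 a b : mnm2 a b x2 = b.
Proof. by rewrite /mnm2 mnmDE !mulmnE !mnm1E /=; lia. Qed.

Lemma mnm2_eta (m : 'X_{1..2}) : m = mnm2 (m x1) (m x2).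
Proof.
apply/mnmP => -[[|[|//]] i_lt2].
- by rewrite (_ : Ordinal i_lt2 = x1) ?mnm2E1 //; apply/val_inj.
- by rewrite (_ : Ordinal i_lt2 = x2) ?mnm2E2 //; apply/val_inj.
Qed.

Lemma monoE a b : mono a b = 'X_[mnm2 a b].
Proof. by rewrite /mono /mnm2 mpolyXD -!mpolyXn. Qed.

Lemma mnm2_inj a b c d : (mnm2 a b == mnm2 c d) = (a == c) && (b == d).
Proof.
apply/eqP/andP => [E|[/eqP -> /eqP ->]] //.
by split; apply/eqP; [rewrite -(mnm2E1 a b) E mnm2E1 | rewrite -(mnm2E2 a b) E mnm2E2].
Qed.

Lemma mcoeff_mono a b u v : (mono a b)@_(mnm2 u v) = ((a == u) && (b == v))%:R.
Proof. by rewrite monoE mcoeffX mnm2_inj. Qed.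

Lemma sum_pcomp a1 a2 j :
  \sum_(1 <= s < (a1 + a2).+1) Defs.pcomp a1 a2 s j =
  a1%:R *: mono (a1 + j - 1) a2 + a2%:R *: mono a1 (a2 + j - 1).
Proof.
rewrite (big_cat_nat _ (n := a1.+1)) //=; last by lia.
rewrite (eq_big_nat _ _ (F2 := fun=> mono (a1 + j - 1) a2)); last first.
  by move=> s /andP[_ s_le_a1]; rewrite /Defs.pcomp -ltnS s_le_a1.
rewrite [X in _ + X](eq_big_nat _ _ (F2 := fun=> mono a1 (a2 + j - 1))); last first.
  by move=> s /andP[a1_lt_s _]; rewrite /Defs.pcomp leqNgt a1_lt_s.
by rewrite !sumr_const_nat !scaler_nat; congr (_ *+ _ + _ *+ _); lia.
Qed.

Lemma brmonoE a1 a2 b1 b2 : brmono a1 a2 b1 b2 =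
  b1%:R *: mono (b1 + (a1 + a2) - 1) b2 + b2%:R *: mono b1 (b2 + (a1 + a2) - 1)
  - (a1%:R *: mono (a1 + (b1 + b2) - 1) a2 + a2%:R *: mono a1 (a2 + (b1 + b2) - 1)).
Proof. by rewrite /brmono !sum_pcomp. Qed.

Lemma br_mono a1 a2 b1 b2 : br (mono a1 a2) (mono b1 b2) = brmono a1 a2 b1 b2.
Proof.
rewrite /br !monoE !msuppX !big_seq1 !mcoeffX !eqxx mulr1 scale1r.
by rewrite !mnm2E1 !mnm2E2.
Qed.

Lemma mcoeff_brmono a1 a2 b1 b2 u v : (brmono a1 a2 b1 b2)@_(mnm2 u v) =
  b1%:R * (((b1 + (a1 + a2) - 1)%N == u) && (b2 == v))%:R
  + b2%:R * ((b1 == u) && ((b2 + (a1 + a2) - 1)%N == v))%:R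
  - (a1%:R * (((a1 + (b1 + b2) - 1)%N == u) && (a2 == v))%:R
  + a2%:R * ((a1 == u) && ((a2 + (b1 + b2) - 1)%N == v))%:R).
Proof. by rewrite brmonoE !mcoeffB !mcoeffD !mcoeffZ !mcoeff_mono. Qed.

Lemma mcoeff_brmono_eq0 a1 a2 b1 b2 u v :
  (0 < a1 + a2)%N -> (0 < b1 + b2)%N -> (u + v != a1 + a2 + b1 + b2 - 1)%N ->
  (brmono a1 a2 b1 b2)@_(mnm2 u v) = 0.
Proof.
move=> a_gt0 b_gt0 deg_uv.
have eqb_deg x y : (x + y != u + v)%N -> ((x == u) && (y == v)) = false.
  by apply: contraNF => /andP[/eqP -> /eqP ->].
by rewrite mcoeff_brmono !eqb_deg ?mulr0 ?subrr ?addr0 //; lia.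
Qed.

Lemma inL_mono a b : (0 < a)%N -> (0 < b)%N -> inL (mono a b).
Proof. by move=> a_gt0 b_gt0; rewrite /inL monoE msuppX /= mnm2E1 mnm2E2 a_gt0 b_gt0. Qed.

Lemma derived0 : inDerived 0.
Proof. by exists [::]; rewrite big_nil. Qed.

Lemma derivedD p q : inDerived p -> inDerived q -> inDerived (p + q).
Proof.
move=> [s [Ls ->]] [t [Lt ->]]; exists (s ++ t).
by rewrite all_cat Ls Lt big_cat.
Qed.

Lemma derivedZ c p : inDerived p -> inDerived (c *: p).
Proof.
move=> [s [Ls ->]]; exists [seq (c * x.1.1, x.1.2, x.2) | x <- s].
rewrite all_map big_map scaler_sumr; split=> //.
by apply: eq_bigr => x _; rewrite scalerA.
Qed.

Lemma derivedB p q : inDerived p -> inDerived q -> inDerived (p - q).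
Proof. by move=> Dp Dq; apply: derivedD => //; rewrite -scaleN1r; apply: derivedZ. Qed.

Lemma derivedMn p n : inDerived p -> inDerived (p *+ n).
Proof. by rewrite -scaler_nat; apply: derivedZ. Qed.

Lemma derivedMn_inv p n : (0 < n)%N -> inDerived (p *+ n) -> inDerived p.
Proof.
move=> n_gt0 /(derivedZ n%:R^-1).
by rewrite -scaler_nat scalerA mulVf ?scale1r // pnatr_eq0 -lt0n.
Qed.

Lemma derived_sum (I : Type) (r : seq I) (P : pred I) (F : I -> {mpoly rat[2]}) :
  (forall i, P i -> inDerived (F i)) -> inDerived (\sum_(i <- r | P i) F i).
Proof. by move=> DF; apply: big_ind => //; [exact: derived0 | exact: derivedD]. Qed.

Lemma derived_brmono a1 a2 b1 b2 :
  (0 < a1)%N -> (0 < a2)%N -> (0 < b1)%N -> (0 < b2)%N ->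
  inDerived (brmono a1 a2 b1 b2).
Proof.
move=> *; exists [:: (1, mono a1 a2, mono b1 b2)].
by rewrite /= !inL_mono // big_seq1 scale1r br_mono.
Qed.

(* The exponents are abstracted so that [apply] can match a bracket written out as a
   combination of monomials. *)
Lemma derived_bracket a1 a2 b1 b2 c1 c2 c3 c4 :
  (0 < a1)%N -> (0 < a2)%N -> (0 < b1)%N -> (0 < b2)%N ->
  c1 = (b1 + (a1 + a2) - 1)%N -> c2 = (b2 + (a1 + a2) - 1)%N ->
  c3 = (a1 + (b1 + b2) - 1)%N -> c4 = (a2 + (b1 + b2) - 1)%N ->
  inDerived (b1%:R *: mono c1 b2 + b2%:R *: mono b1 c2
             - (a1%:R *: mono c3 a2 + a2%:R *: mono a1 c4)).
Proof. by move=> *; subst; rewrite -brmonoE; apply: derived_brmono. Qed.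

(* r1, ..., r5 are the brackets of x1 x2 with x1 x2^(m+1), x1^(m+1) x2 and x1^2 x2^m, and of
   x1^2 x2 and x1 x2^2 with x1 x2^m. *)
Lemma derived_mono_ends n : (4 <= n)%N -> inDerived (mono 1 n) /\ inDerived (mono n 1).
Proof.
move=> n_ge4; have [k ->] : exists k, n = (k + 4)%N by exists (n - 4)%N; lia.
set m := (k + 2)%N.
set X := mono 1 (m + 2); set Y := mono (m + 2) 1.
set X2 := mono 2 (m + 1); set Y2 := mono (m + 1) 2; set X3 := mono 3 m.
have -> : (k + 4 = m + 2)%N by rewrite /m; lia.
rewrite -/X -/Y.
set r1 := 1%:R *: X2 + (m + 1)%:R *: X - (1%:R *: Y + 1%:R *: X).
set r2 := (m + 1)%:R *: Y + 1%:R *: Y2 - (1%:R *: Y + 1%:R *: X).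
set r3 := 2%:R *: X3 + m%:R *: X2 - (1%:R *: Y + 1%:R *: X).
set r4 := 1%:R *: X3 + m%:R *: X - (2%:R *: Y + 1%:R *: X2).
set r5 := 1%:R *: X3 + m%:R *: X - (1%:R *: Y2 + 2%:R *: X).
have D1 : inDerived r1 by apply: derived_bracket; rewrite /m; lia.
have D2 : inDerived r2 by apply: derived_bracket; rewrite /m; lia.
have D3 : inDerived r3 by apply: derived_bracket; rewrite /m; lia.
have D4 : inDerived r4 by apply: derived_bracket; rewrite /m; lia.
have D5 : inDerived r5 by apply: derived_bracket; rewrite /m; lia.
have DXY : inDerived (X - Y).
  apply: (@derivedMn_inv _ (m + 3)); first by lia.
  have -> : (X - Y) *+ (m + 3) = r4 - r5 + r1 - r2.
    by rewrite /r1 /r2 /r4 /r5 !scaler_nat; ring.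
  by apply: derivedB => //; apply: derivedD => //; apply: derivedB.
have DX : inDerived X.
  apply: (@derivedMn_inv _ ((m + 4) * (k + 1))); first by lia.
  have -> : X *+ ((m + 4) * (k + 1)) = r4 *+ 2 + r1 *+ (m + 2) - r3 - (X - Y) *+ (m + 5).
    by rewrite /r1 /r3 /r4 !scaler_nat /m; ring.
  by apply: derivedB; [apply: derivedB => //; apply: derivedD | ]; apply: derivedMn.
split=> //; rewrite (_ : Y = X - (X - Y)); first exact: derivedB.
by rewrite opprB addrC subrK.
Qed.

Lemma derived_mono a b : (0 < a)%N -> (0 < b)%N -> (5 <= a + b)%N -> inDerived (mono a b).
Proof.
move=> a_gt0 b_gt0 deg_ge5.
have [n n_ge4 n_eq] : exists2 n, (4 <= n)%N & (a + b = n.+1)%N by exists (a + b - 1)%N; lia.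
have [DX DY] := derived_mono_ends n_ge4.
elim: a b a_gt0 b_gt0 n_eq {deg_ge5} => [//|[_ b _ _ n_eq|a IHa b _ b_gt0 n_eq]].
  by rewrite (_ : b = n) //; lia.
have D : inDerived (a.+1%:R *: mono a.+2 b + b%:R *: mono a.+1 b.+1
                    - (1%:R *: mono n 1 + 1%:R *: mono 1 n)).
  by apply: derived_bracket; lia.
apply: (@derivedMn_inv _ a.+1) => //.
have -> : mono a.+2 b *+ a.+1 =
    (a.+1%:R *: mono a.+2 b + b%:R *: mono a.+1 b.+1 - (1%:R *: mono n 1 + 1%:R *: mono 1 n))
    - mono a.+1 b.+1 *+ b + (mono n 1 + mono 1 n).
  by rewrite !scaler_nat; ring.
apply: derivedD; last exact: derivedD.
by apply: derivedB => //; apply: derivedMn; apply: IHa; lia.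
Qed.

Lemma derived_mono_deg4 : inDerived (mono 2 2) /\ inDerived (mono 1 3 - mono 3 1).
Proof.
set r21 := 2%:R *: mono 3 1 + 1%:R *: mono 2 2 - (1%:R *: mono 3 1 + 1%:R *: mono 1 3).
set r12 := 1%:R *: mono 2 2 + 2%:R *: mono 1 3 - (1%:R *: mono 3 1 + 1%:R *: mono 1 3).
have D21 : inDerived r21 by apply: derived_bracket.
have D12 : inDerived r12 by apply: derived_bracket.
split; apply: (@derivedMn_inv _ 2) => //.
  have -> : mono 2 2 *+ 2 = r21 + r12 by rewrite /r21 /r12 !scaler_nat; ring.
  exact: derivedD.
have -> : (mono 1 3 - mono 3 1) *+ 2 = r12 - r21 by rewrite /r21 /r12 !scaler_nat; ring.
exact: derivedB.
Qed.

Definition h1_coords (p : {mpoly rat[2]}) : 'rV[rat]_4 :=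
  \row_(i < 4) [:: p@_(mnm2 1 1); p@_(mnm2 2 1); p@_(mnm2 1 2);
                   p@_(mnm2 1 3) + p@_(mnm2 3 1)]`_i.

Lemma h1_coords_is_linear : linear h1_coords.
Proof.
move=> c p q; apply/rowP => -[[|[|[|[|//]]]] i_lt4]; rewrite !mxE /=;
  rewrite ?mcoeffD ?mcoeffZ //; ring.
Qed.

HB.instance Definition _ :=
  GRing.isLinear.Build rat {mpoly rat[2]} 'rV[rat]_4 _ h1_coords h1_coords_is_linear.

Definition h1_basis (i : 'I_4) : {mpoly rat[2]} :=
  [:: mono 1 1; mono 2 1; mono 1 2; mono 3 1]`_i.

Definition h1_lift (v : 'rV[rat]_4) : {mpoly rat[2]} := \sum_(i < 4) v 0 i *: h1_basis i.

Lemma h1_lift_is_linear : linear h1_lift.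
Proof.
move=> c v w; rewrite /h1_lift scaler_sumr -big_split; apply: eq_bigr => i _ /=.
by rewrite !mxE scalerDl scalerA.
Qed.

HB.instance Definition _ :=
  GRing.isLinear.Build rat 'rV[rat]_4 {mpoly rat[2]} _ h1_lift h1_lift_is_linear.

Lemma h1_coords_basis i : h1_coords (h1_basis i) = delta_mx 0 i.
Proof.
apply/rowP => j; rewrite !mxE.
by case: i j => -[|[|[|[|//]]]] ? -[[|[|[|[|//]]]] ?]; rewrite /= !mcoeff_mono.
Qed.

Lemma h1_coords_lift v : h1_coords (h1_lift v) = v.
Proof.
rewrite [RHS]row_sum_delta linear_sum; apply: eq_bigr => i _.
by rewrite linearZ /= h1_coords_basis.
Qed.

Lemma inLP p :
  inL p <-> (forall m : 'X_{1..2}, ~~ ((0 < m x1) && (0 < m x2))%N -> p@_m = 0).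
Proof.
split=> [/allP Lp m m_bad | Lp].
  by apply: memN_msupp_eq0; apply: contra m_bad; apply: Lp.
by apply/allP => m; rewrite mcoeff_msupp; apply: contraR => /Lp ->.
Qed.

Lemma inL_h1_lift v : inL (h1_lift v).
Proof.
apply/inLP => m m_bad; rewrite /h1_lift raddf_sum big1 // => i _.
rewrite /= mcoeffZ; case: i => -[|[|[|[|//]]]] ?; rewrite /h1_basis /= monoE mcoeffX;
  by case: eqP m_bad => [<-|_ _]; rewrite ?mulr0 // mnm2E1 mnm2E2.
Qed.

Lemma h1_lift_coords_mono a b : h1_lift (h1_coords (mono a b)) =
  ((a == 1) && (b == 1))%:R *: mono 1 1 + ((a == 2) && (b == 1))%:R *: mono 2 1
  + ((a == 1) && (b == 2))%:R *: mono 1 2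
  + (((a == 1) && (b == 3))%:R + ((a == 3) && (b == 1))%:R) *: mono 3 1.
Proof. by rewrite /h1_lift !big_ord_recr big_ord0 /= !mxE /= !mcoeff_mono add0r. Qed.

Lemma derived_sub_lift_mono a b : (0 < a)%N -> (0 < b)%N ->
  inDerived (mono a b - h1_lift (h1_coords (mono a b))).
Proof.
move=> a_gt0 b_gt0; rewrite h1_lift_coords_mono.
have [deg_ge5|deg_le4] := leqP 5 (a + b).
  have eqb_small x y : (x + y < 5)%N -> ((a == x) && (b == y)) = false.
    by move=> ?; apply: contraTF deg_ge5 => /andP[/eqP -> /eqP ->]; rewrite -ltnNge.
  rewrite !eqb_small // !scale0r !addr0 subr0.
  exact: derived_mono.
have [D22 D13] := derived_mono_deg4.
case: a b a_gt0 b_gt0 deg_le4 => [|[|[|[|a]]]] [|[|[|[|b]]]] //= _ _ deg_le4;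
  try by exfalso; lia.
all: rewrite ?scale0r ?scale1r ?addr0 ?add0r ?subr0 ?subrr //; exact: derived0.
Qed.

Lemma derived_sub_lift_coords p : inL p -> inDerived (p - h1_lift (h1_coords p)).
Proof.
move=> /allP Lp; rewrite [X in X - _]mpolyE [X in h1_coords X]mpolyE.
rewrite [h1_coords _]linear_sum [h1_lift _]linear_sum -sumrB big_seq.
apply: derived_sum => m /Lp /andP[m1_gt0 m2_gt0] /=.
rewrite [h1_coords _]linearZ [h1_lift _]linearZ -scalerBr; apply: derivedZ.
by rewrite (mnm2_eta m) -monoE; apply: derived_sub_lift_mono.
Qed.

Lemma linear_derived_eq0 (V : lmodType rat) (f : {linear {mpoly rat[2]} -> V}) :
  (forall a1 a2 b1 b2, (0 < a1)%N -> (0 < a2)%N -> (0 < b1)%N -> (0 < b2)%N ->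
     f (brmono a1 a2 b1 b2) = 0) ->
  forall p, inDerived p -> f p = 0.
Proof.
move=> f_br _ [s [Ls ->]]; rewrite linear_sum big_seq big1 // => -[[c p] q] /(allP Ls).
move=> /andP[/allP Lp /allP Lq] /=; rewrite linearZ_LR /br linear_sum big_seq big1 ?scaler0 //.
move=> m /Lp /andP[m1_gt0 m2_gt0]; rewrite linear_sum big_seq big1 // => n /Lq /andP[n1_gt0 n2_gt0].
by rewrite linearZ_LR f_br ?scaler0.
Qed.

Lemma h1_coords_brmono a1 a2 b1 b2 :
  (0 < a1)%N -> (0 < a2)%N -> (0 < b1)%N -> (0 < b2)%N ->
  h1_coords (brmono a1 a2 b1 b2) = 0.
Proof.
move=> a1_gt0 a2_gt0 b1_gt0 b2_gt0; apply/rowP => i; rewrite !mxE.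
have [deg_ge6|deg_le5] := leqP 6 (a1 + a2 + b1 + b2).
  by case: i => -[|[|[|[|//]]]] _ /=; rewrite ?mcoeff_brmono_eq0 ?addr0 //; lia.
case: a1 a2 b1 b2 a1_gt0 a2_gt0 b1_gt0 b2_gt0 deg_le5
  => [|[|[|a1]]] [|[|[|a2]]] [|[|[|b1]]] [|[|[|b2]]] //= _ _ _ _ deg_le5; try by exfalso; lia.
all: by case: i => -[|[|[|[|//]]]] ?; rewrite /= !mcoeff_brmono /=; ring.
Qed.

Theorem corollary6p2 : H1_iso_Qn 4.
Proof.
exists h1_coords; split=> [c p q _ _ | ]; first exact: linearP.
split=> [v | p Lp]; first by exists (h1_lift v); [exact: inL_h1_lift | exact: h1_coords_lift].
split=> [coords_p0 | ]; last by apply: linear_derived_eq0; exact: h1_coords_brmono.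
by have := derived_sub_lift_coords Lp; rewrite coords_p0 linear0 subr0.
Qed.
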